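(* Let $G$ be a group and let $H_1, H_2, \ldots, H_n$ be the successive vertices of a path $\gamma$ in $\mathcal{C}(G)$. If $H_i \subseteq H_{i+1}$ for all $i$, then $\gamma$ is a geodesic.
   Context: For subgroups $A,B$ of $G$, $c(A,B) = [A:A\cap B][B:A\cap B]$. The commensurability graph $\mathcal{C}(G)$ is the weighted graph whose vertices are all subgroups of $G$, with an edge between $A$ and $B$ if and only if $A\cap B$ has finite index in both $A$ and $B$, this edge having weight $c(A,B)$. The length of a path is the product of its edge weights; the distance between two vertices is the minimal length of a path joining them, and a geodesic is a path whose length equals the distance between its endpoints. *)

From Stdlib Require Import List Arith.
Import ListNotations.

Record Group := {
  carrier :> Type;
  gmul : carrier -> carrier -> carrier;
  gone : carrier;
  ginv : carrier -> carrier;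
  gmulA : forall x y z, gmul x (gmul y z) = gmul (gmul x y) z;
  gmul1l : forall x, gmul gone x = x;
  gmulVl : forall x, gmul (ginv x) x = gone
}.

Section Defs.
Variable G : Group.

Definition subgroup (H : G -> Prop) : Prop :=
  H (gone G) /\
  (forall x y, H x -> H y -> H (gmul G x y)) /\
  (forall x, H x -> H (ginv G x)).

Definition setI (A B : G -> Prop) : G -> Prop := fun x => A x /\ B x.

Definition subset (A B : G -> Prop) : Prop := forall x, A x -> B x.

(** [index_is A K n]: the left cosets xK (x in A) of K (a subgroup of A) are
    exactly n in number, i.e. [A : K] = n (finite). *)
Definition index_is (A K : G -> Prop) (n : nat) : Prop :=
  exists s : list G,
    length s = n /\
    (forall x, In x s -> A x) /\
    (forall i j, i < n -> j < n -> i <> j ->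
        ~ K (gmul G (ginv G (nth i s (gone G))) (nth j s (gone G)))) /\
    (forall a, A a -> exists x, In x s /\ K (gmul G (ginv G x) a)).

(** Edge of the commensurability graph between A and B with weight
    c(A,B) = [A : A∩B][B : A∩B] (an edge exists iff both indices are finite). *)
Definition cweight (A B : G -> Prop) (w : nat) : Prop :=
  exists m n, index_is A (setI A B) m /\ index_is B (setI A B) n /\ w = m * n.

(** [plen p L]: the list p of vertices is a path in C(G) (nonempty, consecutive
    vertices joined by edges) whose length (product of edge weights) is L. *)
Inductive plen : list (G -> Prop) -> nat -> Prop :=
  | plen_one : forall H, plen [H] 1
  | plen_cons : forall H K p w L,
      cweight H K w -> plen (K :: p) L -> plen (H :: K :: p) (w * L).

Definition geodesic (p : list (G -> Prop)) : Prop :=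
  exists L, plen p L /\
    forall q L', Forall subgroup q -> plen q L' ->
      hd (fun _ => False) q = hd (fun _ => False) p ->
      last q (fun _ => False) = last p (fun _ => False) ->
      L <= L'.

Inductive ascending : list (G -> Prop) -> Prop :=
  | asc_nil : ascending []
  | asc_one : forall H, ascending [H]
  | asc_cons : forall H K p, subset H K -> ascending (K :: p) -> ascending (H :: K :: p).

End Defs.

(* Along an ascending chain H_1 ⊆ ... ⊆ H_n each edge has weight
   c(H_i, H_{i+1}) = [H_{i+1} : H_i], so by the tower law the chain has length
   [H_n : H_1] = c(H_1, H_n).  Every other path from H_1 to H_n is at least as
   long because c is submultiplicative, c(A, C) <= c(A, B) c(B, C): products of
   coset representatives of A ∩ B in A and of B ∩ C in B cover A by finitely
   many cosets of C, whence [A : A ∩ C] <= [A : A ∩ B] [B : B ∩ C].  Indices are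
   only given by lists of coset representatives, so they are compared by a
   pigeonhole argument on such lists. *)

From Stdlib Require Import List Arith Lia Classical.
Import ListNotations.

Lemma ForallOrdPairs_nthP {T : Type} (P : T -> T -> Prop) (s : list T) (d : T) :
  ForallOrdPairs P s <->
  forall i j, i < j < length s -> P (nth i s d) (nth j s d).
Proof.
  split.
  - induction 1 as [|x s Hx _ IH]; intros i j Hij; simpl in *; [lia|].
    destruct i as [|i], j as [|j]; try lia.
    + rewrite Forall_forall in Hx. apply Hx, nth_In. lia.
    + apply IH. lia.
  - induction s as [|x s IH]; intros Hs; constructor.
    + apply Forall_forall. intros y Hy.
      destruct (In_nth _ _ d Hy) as [j [Hj <-]].
      apply (Hs 0 (S j)). simpl. lia.
    + apply IH. intros i j Hij. apply (Hs (S i) (S j)). simpl. lia.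
Qed.

Lemma ForallOrdPairs_app {T : Type} (P : T -> T -> Prop) (s t : list T) :
  ForallOrdPairs P s -> ForallOrdPairs P t ->
  (forall x y, In x s -> In y t -> P x y) -> ForallOrdPairs P (s ++ t).
Proof.
  induction 1 as [|x s Hx _ IH]; intros Ht Hst; simpl; [exact Ht|].
  constructor.
  - apply Forall_app. split; [exact Hx|].
    apply Forall_forall. intros y Hy. apply Hst; simpl; auto.
  - apply IH; [exact Ht|]. intros y z Hy Hz. apply Hst; simpl; auto.
Qed.

Lemma ForallOrdPairs_map {T U : Type} (P : T -> T -> Prop) (Q : U -> U -> Prop)
    (f : T -> U) (s : list T) :
  (forall x y, P x y -> Q (f x) (f y)) ->
  ForallOrdPairs P s -> ForallOrdPairs Q (map f s).
Proof.
  intros Hf. induction 1 as [|x s Hx _ IH]; simpl; constructor; [|exact IH].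
  apply Forall_map. revert Hx. apply Forall_impl. auto.
Qed.

Section Representatives.
Context {T : Type} (R : T -> T -> Prop).
Hypotheses (R_refl : forall x, R x x) (R_sym : forall x y, R x y -> R y x)
  (R_trans : forall x y z, R x y -> R y z -> R x z).

Definition pairwise_inequiv (s : list T) : Prop := ForallOrdPairs (fun x y => ~ R x y) s.

Definition represented_in (s t : list T) : Prop :=
  forall x, In x s -> exists y, In y t /\ R y x.

Lemma length_le_represented (s t : list T) :
  pairwise_inequiv s -> represented_in s t -> length s <= length t.
Proof.
  intros Hs. revert t.
  induction Hs as [|x s Hx _ IH]; intros t Hst; simpl; [lia|].
  destruct (Hst x (or_introl eq_refl)) as [y [Hy Ryx]].
  destruct (in_split _ _ Hy) as [t1 [t2 ->]].
  assert (Hs' : length s <= length (t1 ++ t2)).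
  { apply IH. intros z Hz.
    destruct (Hst z (or_intror Hz)) as [y' [Hy' Ry'z]].
    apply in_app_or in Hy' as [Hy'|[<-|Hy']].
    - exists y'. auto using in_or_app.
    - (* [x] and [z] are both equivalent to [y] *)
      exfalso. rewrite Forall_forall in Hx. apply (Hx z Hz). eauto.
    - exists y'. auto using in_or_app. }
  rewrite length_app in *. simpl. lia.
Qed.

Lemma exists_pairwise_inequiv_sublist (v : list T) :
  exists v', length v' <= length v /\ incl v' v /\
    pairwise_inequiv v' /\ represented_in v v'.
Proof.
  induction v as [|x v IH].
  - exists []. split; [reflexivity|]. split; [apply incl_refl|].
    split; [constructor|]. intros y [].
  - destruct IH as [v' [Hl [Hincl [Hpw Hrep]]]].
    destruct (classic (exists z, In z v' /\ R z x)) as [Hx|Hx].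
    + exists v'. split; [simpl; lia|]. split; [apply incl_tl, Hincl|].
      split; [exact Hpw|]. intros y [<-|Hy]; [exact Hx|auto].
    + exists (x :: v'). split; [simpl; lia|].
      split; [apply incl_cons; [left; reflexivity|apply incl_tl, Hincl]|].
      split.
      * constructor; [|exact Hpw]. apply Forall_forall. intros y Hy Rxy.
        apply Hx. eauto.
      * intros y [<-|Hy]; [exists x; split; [left|apply R_refl]; reflexivity|].
        destruct (Hrep y Hy) as [z [Hz Rzy]]. exists z. split; [right|]; assumption.
Qed.

End Representatives.

Local Notation "x ** y" := (gmul _ x y) (at level 40, left associativity).
Local Notation "x ^-1" := (ginv _ x) (at level 3, format "x ^-1").

Section GroupLaws.
Context {G : Group}.
Implicit Types x y z : G.

Lemma mulgA x y z : x ** (y ** z) = x ** y ** z.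
Proof. apply gmulA. Qed.

Lemma mul1g x : gone G ** x = x.
Proof. apply gmul1l. Qed.

Lemma mulVg x : x^-1 ** x = gone G.
Proof. apply gmulVl. Qed.

Lemma mulKg x y : x^-1 ** (x ** y) = y.
Proof. rewrite mulgA, mulVg, mul1g. reflexivity. Qed.

Lemma mulgV x : x ** x^-1 = gone G.
Proof.
  assert (Hidem : x ** x^-1 ** (x ** x^-1) = x ** x^-1).
  { rewrite <- mulgA, mulKg. reflexivity. }
  rewrite <- (mulKg (x ** x^-1) (x ** x^-1)), Hidem at 1. apply mulVg.
Qed.

Lemma mulg1 x : x ** gone G = x.
Proof. rewrite <- (mulVg x), mulgA, mulgV, mul1g. reflexivity. Qed.

Lemma mulKVg x y : x ** (x^-1 ** y) = y.
Proof. rewrite mulgA, mulgV, mul1g. reflexivity. Qed.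

Lemma invg_unique x y : x ** y = gone G -> x^-1 = y.
Proof. intros Hxy. rewrite <- (mulKg x y), Hxy, mulg1. reflexivity. Qed.

Lemma invMg x y : (x ** y)^-1 = y^-1 ** x^-1.
Proof. apply invg_unique. rewrite <- !mulgA, mulKVg, mulgV. reflexivity. Qed.

Lemma invgK x : x^-1^-1 = x.
Proof. apply invg_unique, mulVg. Qed.

Lemma invg1 : (gone G)^-1 = gone G.
Proof. apply invg_unique, mul1g. Qed.

End GroupLaws.

Ltac group_simpl :=
  repeat progress rewrite ?invMg, ?invgK, <- ?mulgA, ?mulKg, ?mulKVg, ?mulgV,
    ?mulVg, ?mulg1, ?mul1g.

Section Cosets.
Context {G : Group}.
Implicit Types (A B C H K : G -> Prop) (s t : list G).

Definition coset_rel K (x y : G) : Prop := K (x^-1 ** y).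

Definition covers A K s : Prop := forall a, A a -> exists x, In x s /\ coset_rel K x a.

Definition products s t : list G := flat_map (fun x => map (gmul G x) t) s.

Lemma length_products s t : length (products s t) = length s * length t.
Proof.
  apply flat_map_constant_length. intros x _. apply length_map.
Qed.

Lemma in_products s t z :
  In z (products s t) <-> exists x y, In x s /\ In y t /\ z = x ** y.
Proof.
  unfold products. rewrite in_flat_map. split.
  - intros [x [Hx Hz]]. apply in_map_iff in Hz as [y [<- Hy]]. eauto.
  - intros [x [y [Hx [Hy ->]]]]. exists x. split; [exact Hx|]. apply in_map, Hy.
Qed.

Lemma subgroup1 H : subgroup G H -> H (gone G).
Proof. intros HH. apply HH. Qed.

Lemma subgroupM H x y : subgroup G H -> H x -> H y -> H (x ** y).
Proof. intros HH. apply HH. Qed.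

Lemma subgroupV H x : subgroup G H -> H x -> H x^-1.
Proof. intros HH. apply HH. Qed.

Lemma subgroup_setI A B : subgroup G A -> subgroup G B -> subgroup G (setI G A B).
Proof. unfold subgroup, setI. firstorder. Qed.

Lemma covers_subset A K K' s : subset G K K' -> covers A K s -> covers A K' s.
Proof.
  intros HKK' Hs a Ha. destruct (Hs a Ha) as [x [Hx HK]].
  exists x. split; [exact Hx|apply HKK', HK].
Qed.

Lemma covers_products A B C s t :
  covers A B s -> covers B C t -> covers A C (products s t).
Proof.
  intros Hs Ht a Ha. destruct (Hs a Ha) as [x [Hx HB]].
  destruct (Ht _ HB) as [y [Hy HC]]. exists (x ** y). split.
  - apply in_products. eauto.
  - unfold coset_rel in *. rewrite invMg, <- mulgA. exact HC.
Qed.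

Section CosetRelation.
Variable K : G -> Prop.
Hypothesis K_subgroup : subgroup G K.

Lemma coset_rel_refl x : coset_rel K x x.
Proof. unfold coset_rel. rewrite mulVg. apply subgroup1, K_subgroup. Qed.

Lemma coset_rel_sym x y : coset_rel K x y -> coset_rel K y x.
Proof.
  unfold coset_rel. intros Hxy. apply (subgroupV _ _ K_subgroup) in Hxy.
  rewrite invMg, invgK in Hxy. exact Hxy.
Qed.

Lemma coset_rel_trans x y z : coset_rel K x y -> coset_rel K y z -> coset_rel K x z.
Proof.
  unfold coset_rel. intros Hxy Hyz.
  pose proof (subgroupM _ _ _ K_subgroup Hxy Hyz) as Hxz.
  rewrite <- mulgA, mulKVg in Hxz. exact Hxz.
Qed.

Lemma index_isP A n :
  index_is G A K n <->
  exists s, length s = n /\ (forall x, In x s -> A x) /\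
    pairwise_inequiv (coset_rel K) s /\ covers A K s.
Proof.
  split.
  - intros [s [Hlen [HA [Hdist Hcov]]]]. exists s.
    repeat split; [exact Hlen|exact HA| |exact Hcov].
    unfold pairwise_inequiv. apply (ForallOrdPairs_nthP _ _ (gone G)). intros i j Hij.
    apply Hdist; lia.
  - intros [s [Hlen [HA [Hdist Hcov]]]]. exists s.
    repeat split; [exact Hlen|exact HA| |exact Hcov].
    intros i j Hi Hj Hij.
    unfold pairwise_inequiv in Hdist. rewrite (ForallOrdPairs_nthP _ _ (gone G)) in Hdist.
    destruct (Nat.lt_gt_cases i j) as [[Hlt|Hgt] _]; [exact Hij|..].
    + apply Hdist. lia.
    + intros Hji. apply (Hdist j i); [lia|]. apply coset_rel_sym, Hji.
Qed.

Lemma index_is_unique A m n : index_is G A K m -> index_is G A K n -> m = n.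
Proof.
  assert (Hle : forall m n, index_is G A K m -> index_is G A K n -> m <= n).
  { intros m' n' [s [<- [HAs [Hs _]]]]%index_isP [t [<- [_ [_ Ht]]]]%index_isP.
    apply (length_le_represented _ coset_rel_sym coset_rel_trans _ _ Hs).
    intros x Hx. apply Ht, HAs, Hx. }
  intros Hm Hn. apply Nat.le_antisymm; apply Hle; assumption.
Qed.

Lemma index_is_of_covers A v :
  (forall x, In x v -> A x) -> covers A K v ->
  exists n, n <= length v /\ index_is G A K n.
Proof.
  intros HAv Hcov.
  destruct (exists_pairwise_inequiv_sublist _ coset_rel_refl coset_rel_sym v)
    as [v' [Hlen [Hincl [Hpw Hrep]]]].
  exists (length v'). split; [exact Hlen|]. apply index_isP.
  exists v'. repeat split; [intros x Hx; apply HAv, Hincl, Hx|exact Hpw|].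
  intros a Ha. destruct (Hcov a Ha) as [y [Hy Hya]].
  destruct (Hrep y Hy) as [z [Hz Hzy]]. exists z. split; [exact Hz|].
  apply (coset_rel_trans _ y); assumption.
Qed.

End CosetRelation.
End Cosets.

Section Indices.
Context {G : Group}.
Implicit Types (A B C H K : G -> Prop) (s t : list G).

Lemma index_is_ext A A' K K' n :
  (forall x, A x <-> A' x) -> (forall x, K x <-> K' x) ->
  index_is G A K n -> index_is G A' K' n.
Proof.
  intros HA HK [s [Hlen [HAs [Hdist Hcov]]]]. exists s.
  repeat split; [exact Hlen| | |].
  - intros x Hx. apply HA, HAs, Hx.
  - intros i j Hi Hj Hij HK'. apply (Hdist i j Hi Hj Hij), HK, HK'.
  - intros a Ha. destruct (Hcov a (proj2 (HA a) Ha)) as [x [Hx HKx]].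
    exists x. split; [exact Hx|apply HK, HKx].
Qed.

Lemma setI_idPl H K x : subset G H K -> setI G H K x <-> H x.
Proof. unfold setI. intros HHK. split; [tauto|]. auto. Qed.

Lemma setIC A B x : setI G A B x <-> setI G B A x.
Proof. unfold setI. tauto. Qed.

Lemma index_is_gt0 A K n : A (gone G) -> index_is G A K n -> 0 < n.
Proof.
  intros HA1 [s [<- [_ [_ Hcov]]]]. destruct (Hcov _ HA1) as [x [Hx _]].
  destruct s; [contradiction|simpl; lia].
Qed.

Lemma index_is_self H : subgroup G H -> index_is G H H 1.
Proof.
  intros HH. apply index_isP; [exact HH|]. exists [gone G].
  repeat split; [intros x [<-|[]]; apply HH|repeat constructor|].
  intros a Ha. exists (gone G). split; [left; reflexivity|].
  unfold coset_rel. rewrite invg1, mul1g. exact Ha.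
Qed.

Lemma pairwise_inequiv_products H K s t :
  subgroup G H -> subset G K H -> (forall y, In y t -> H y) ->
  pairwise_inequiv (coset_rel H) s -> pairwise_inequiv (coset_rel K) t ->
  pairwise_inequiv (coset_rel K) (products s t).
Proof.
  intros HH HKH HHt Hs Ht. induction Hs as [|x s Hx _ IH]; [constructor|].
  change (products (x :: s) t) with (map (gmul G x) t ++ products s t).
  apply ForallOrdPairs_app; [|exact IH|].
  - revert Ht. apply ForallOrdPairs_map. intros y y' Hyy' HK. apply Hyy'.
    unfold coset_rel in *. rewrite invMg, <- mulgA, mulKg in HK. exact HK.
  - intros z z' Hz Hz' HK. apply in_map_iff in Hz as [y [<- Hy]].
    apply in_products in Hz' as [x' [y' [Hx' [Hy' ->]]]].
    rewrite Forall_forall in Hx. apply (Hx x' Hx'). unfold coset_rel in *.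
    (* [x^-1 x' = y ((x y)^-1 (x' y')) y'^-1] lies in [H] *)
    replace (x^-1 ** x') with (y ** ((x ** y)^-1 ** (x' ** y')) ** y'^-1)
      by (group_simpl; reflexivity).
    apply subgroupM; [exact HH| |apply subgroupV; [exact HH|auto]].
    apply subgroupM; auto.
Qed.

Lemma index_is_tower C H K a b :
  subgroup G C -> subgroup G H -> subgroup G K ->
  subset G H C -> subset G K H ->
  index_is G C H a -> index_is G H K b -> index_is G C K (a * b).
Proof.
  intros HC HH HK HHC HKH Ha Hb.
  apply index_isP in Ha as [s [<- [HCs [Hs Hcovs]]]]; [|exact HH].
  apply index_isP in Hb as [t [<- [HHt [Ht Hcovt]]]]; [|exact HK].
  apply index_isP; [exact HK|]. exists (products s t).
  repeat split; [apply length_products| |now apply (pairwise_inequiv_products H)|].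
  - intros z Hz. apply in_products in Hz as [x [y [Hx [Hy ->]]]].
    apply subgroupM; [exact HC|apply HCs, Hx|apply HHC, HHt, Hy].
  - apply covers_products with H; [exact Hcovs|exact Hcovt].
Qed.

Lemma covers_setI A C u :
  subgroup G A -> subgroup G C -> covers A C u ->
  exists v, length v <= length u /\ (forall x, In x v -> A x) /\ covers A (setI G A C) v.
Proof.
  intros HA HC Hcov.
  enough (Hsel : forall u', exists v, length v <= length u' /\ (forall x, In x v -> A x) /\
    forall a, A a -> (exists x, In x u' /\ coset_rel C x a) ->
      exists y, In y v /\ coset_rel (setI G A C) y a).
  { destruct (Hsel u) as [v [Hlen [HAv Hv]]]. exists v.
    repeat split; [exact Hlen|exact HAv|]. intros a Ha. apply Hv, Hcov, Ha; exact Ha. }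
  induction u' as [|x u' IH].
  - exists []. split; [reflexivity|]. split; [intros x []|]. intros a _ [x [[] _]].
  - destruct IH as [v [Hlen [HAv Hv]]].
    (* replace [x] by an element of [A] in the same [C]-coset, if there is one *)
    destruct (classic (exists a0, A a0 /\ coset_rel C x a0)) as [[a0 [HAa0 Ha0]]|Hnone].
    + exists (a0 :: v). split; [simpl; lia|].
      split; [intros y [<-|Hy]; auto|].
      intros a Ha [x' [[<-|Hx'] Hx'a]].
      2:{ destruct (Hv a Ha) as [y [Hy Hya]]; [eauto|].
          exists y. split; [right|]; assumption. }
      exists a0. split; [left; reflexivity|]. split.
      * apply subgroupM; [exact HA|apply subgroupV, HAa0; exact HA|exact Ha].
      * apply (coset_rel_trans _ HC _ x); [apply coset_rel_sym|]; assumption.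
    + exists v. split; [simpl; lia|]. split; [exact HAv|].
      intros a Ha [x' [[<-|Hx'] Hx'a]]; [exfalso; eauto|eauto].
Qed.

Lemma index_is_setI_submul A B C m k :
  subgroup G A -> subgroup G C ->
  index_is G A (setI G A B) m -> index_is G B (setI G B C) k ->
  exists n, n <= m * k /\ index_is G A (setI G A C) n.
Proof.
  intros HA HC [s [<- [_ [_ Hcovs]]]] [t [<- [_ [_ Hcovt]]]].
  assert (Hcov : covers A C (products s t)).
  { apply covers_products with B; (eapply covers_subset; [|eassumption]);
      intros x []; assumption. }
  destruct (covers_setI A C _ HA HC Hcov) as [v [Hlen [HAv Hcovv]]].
  destruct (index_is_of_covers _ (subgroup_setI A C HA HC) A v HAv Hcovv)
    as [n [Hn Hidx]].
  exists n. split; [|exact Hidx]. rewrite length_products in Hlen. lia.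
Qed.

Lemma cweight_triangle A B C w1 w2 :
  subgroup G A -> subgroup G C -> cweight G A B w1 -> cweight G B C w2 ->
  exists w, cweight G A C w /\ w <= w1 * w2.
Proof.
  intros HA HC [a1 [b1 [Ha1 [Hb1 ->]]]] [b2 [c2 [Hb2 [Hc2 ->]]]].
  destruct (index_is_setI_submul A B C a1 b2 HA HC Ha1 Hb2) as [n1 [Hn1 I1]].
  destruct (index_is_setI_submul C B A c2 b1 HC HA) as [n2 [Hn2 I2]];
    try (eapply index_is_ext; [reflexivity|apply setIC|eassumption]).
  exists (n1 * n2). split.
  - exists n1, n2. split; [exact I1|split; [|reflexivity]].
    eapply index_is_ext; [reflexivity|apply setIC|exact I2].
  - transitivity (a1 * b2 * (c2 * b1)); [apply Nat.mul_le_mono; assumption|].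
    apply Nat.eq_le_incl. ring.
Qed.

End Indices.

Lemma Forall_last {T : Type} (P : T -> Prop) (x : T) (l : list T) (d : T) :
  Forall P (x :: l) -> P (last (x :: l) d).
Proof.
  revert x. induction l as [|y l IH]; intros x Hl; [now inversion Hl|].
  apply IH. now inversion Hl.
Qed.

Section Paths.
Context {G : Group}.
Implicit Types (H K : G -> Prop) (p q : list (G -> Prop)).

Lemma ascending_subset_last H p d :
  ascending G (H :: p) -> subset G H (last (H :: p) d).
Proof.
  revert H. induction p as [|K p IH]; intros H Hasc x Hx; [exact Hx|].
  inversion Hasc as [| |? ? ? HHK HKp]; subst.
  apply (IH K HKp), HHK, Hx.
Qed.

Lemma path_cweight_le q L d :
  plen G q L -> Forall (subgroup G) q ->
  exists w, cweight G (hd d q) (last q d) w /\ w <= L.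
Proof.
  induction 1 as [H|H K p w L Hw Hp IH]; intros Hsub.
  - inversion Hsub as [|? ? HH]; subst.
    assert (HHH : index_is G H (setI G H H) 1).
    { eapply index_is_ext; [reflexivity| |apply index_is_self, HH].
      intros x. symmetry. apply setI_idPl. intros y Hy. exact Hy. }
    exists 1. split; [exists 1, 1; auto|reflexivity].
  - inversion Hsub as [|? ? HH HKp]; subst.
    destruct (IH HKp) as [w' [Hw' Hle]].
    destruct (cweight_triangle H K (last (K :: p) d) w w' HH
                (Forall_last _ _ _ _ HKp) Hw Hw') as [w'' [Hw'' Hle']].
    exists w''. split; [exact Hw''|]. simpl in Hle |- *. nia.
Qed.

Lemma ascending_path_index p L d :
  plen G p L -> Forall (subgroup G) p -> ascending G p ->
  index_is G (last p d) (hd d p) L.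
Proof.
  induction 1 as [H|H K p w L Hw Hp IH]; intros Hsub Hasc.
  - inversion Hsub; subst. apply index_is_self. assumption.
  - inversion Hsub as [|? ? HH HKp]; subst.
    inversion Hasc as [| |? ? ? HHK HascK]; subst.
    destruct Hw as [m [k [Hm [Hk ->]]]].
    assert (HsetI : forall x, setI G H K x <-> H x) by (intros x; apply setI_idPl, HHK).
    assert (Hm1 : m = 1).
    { apply (index_is_unique H HH H); [|apply index_is_self, HH].
      eapply index_is_ext; [reflexivity|exact HsetI|exact Hm]. }
    subst m.
    pose proof (Forall_inv HKp) as HK.
    replace (1 * k * L) with (L * k) by ring.
    change (index_is G (last (K :: p) d) H (L * k)).
    apply index_is_tower with K; try assumption.
    + apply Forall_last, HKp.
    + apply ascending_subset_last, HascK.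
    + apply IH; assumption.
    + eapply index_is_ext; [reflexivity|exact HsetI|exact Hk].
Qed.

End Paths.

Theorem corollary8 (G : Group) (gamma : list (G -> Prop)) (L : nat) :
  Forall (@subgroup G) gamma ->
  plen G gamma L ->
  ascending G gamma ->
  geodesic G gamma.
Proof.
  intros Hsub Hp Hasc. exists L. split; [exact Hp|].
  intros q L' Hsubq Hq Hhd Hlast.
  destruct gamma as [|H1 p]; [inversion Hp|].
  set (d := fun _ : G => False) in *.
  destruct (path_cweight_le q L' d Hq Hsubq) as [w [Hw Hle]].
  rewrite Hhd, Hlast in Hw. simpl hd in Hw.
  destruct Hw as [m [n [Hm [Hn ->]]]].
  pose proof (Forall_inv Hsub) as HH1.
  assert (Hn' : index_is G (last (H1 :: p) d) H1 n).
  { eapply index_is_ext; [reflexivity| |exact Hn].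
    intros x. apply setI_idPl, ascending_subset_last, Hasc. }
  assert (HnL : n = L).
  { apply (index_is_unique H1 HH1 _ _ _ Hn').
    apply (ascending_path_index (H1 :: p) L d Hp Hsub Hasc). }
  assert (Hm_pos : 0 < m) by (apply (index_is_gt0 _ _ _ (subgroup1 _ HH1) Hm)).
  nia.
Qed.
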